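(* Let $q$ be a prime power and $L\subset\mathbb{P}^2$ a line defined over $\mathbb{F}_q$. Let $\mathcal{T}_L$ be the set of non-constant homogeneous $f\in\mathbb{F}_q[x,y,z]$ such that the curve $C=\{f=0\}$ is not transverse to $L$. Then $\mu_d(\mathcal{T}_L)=q^{-1}+q^{-2}-q^{-3}$ for all $d\ge 3$. In particular $\mu(\mathcal{T}_L)=q^{-1}+q^{-2}-q^{-3}$.
   Context: Let $R=\mathbb{F}_q[x,y,z]$, $R_d$ the homogeneous polynomials of degree $d$ (including $0$), $\mu_d(\mathcal{A})=\#(\mathcal{A}\cap R_d)/\#R_d$ and $\mu(\mathcal{A})=\lim_{d\to\infty}\mu_d(\mathcal{A})$. For $f\in R_d$, $C=\{f=0\}$ is not transverse to $L$ if the restriction of $f$ to $L$ (a binary form of degree $d$ after choosing coordinates on $L\cong\mathbb{P}^1$) has a repeated root over $\overline{\mathbb{F}}_q$ or is identically zero; equivalently, $L$ does not meet $C$ in $d$ distinct points (it is tangent to $C$, passes through a singular point of $C$, or is contained in $C$). *)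

From HB Require Import structures.
From Stdlib Require Import ClassicalEpsilon.
From mathcomp Require Import all_boot all_order all_algebra all_field.
From mathcomp Require Import mpoly.

Set Implicit Arguments.
Unset Strict Implicit.
Unset Printing Implicit Defensive.

Import Order.TTheory GRing.Theory Num.Theory.
Local Open Scope ring_scope.

Definition pbool (P : Prop) : bool :=
  if excluded_middle_informative P then true else false.

Section Defs.
Variable F : finFieldType.

Definition Fbar : closedFieldType :=
  projT1 (countable_algebraic_closure F).
Definition toFbar : {rmorphism F -> Fbar} :=
  sval (projT2 (countable_algebraic_closure F)).

Definition mon3 (d : nat) := {m : 'X_{1..3 < d.+1} | mdeg m == d}.

(* R_d: homogeneous polynomials of degree d (including 0), encoded by their
   coefficient vectors on the degree-d monomials. *)
Definition Rd (d : nat) := {ffun mon3 d -> F}.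

Definition poly_of (d : nat) (c : Rd d) : {mpoly F[3]} :=
  \sum_(m : mon3 d) c m *: 'X_[val (val m)].

(* The line L spanned by the F-rational points P, Q is parametrized by
   [s : t] |-> s P + t Q; the restriction of f to L is the binary form
   f(s P + t Q) in the variables s = 'X_0, t = 'X_1. *)
Definition restrict (P Q : 'rV[F]_3) (f : {mpoly F[3]}) : {mpoly F[2]} :=
  comp_mpoly [tuple (P ord0 i *: 'X_0 + Q ord0 i *: 'X_1 : {mpoly F[2]}) | i < 3] f.

(* A binary form g over \bar F has a repeated root [a : b] in P^1(\bar F):
   (b s - a t)^2 divides g. *)
Definition has_repeated_root (g : {mpoly Fbar[2]}) : Prop :=
  exists a b : Fbar, (a, b) != (0, 0) /\
    exists h : {mpoly Fbar[2]}, g = (b *: 'X_0 - a *: 'X_1) ^+ 2 * h.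

Definition not_transverse (P Q : 'rV[F]_3) (f : {mpoly F[3]}) : Prop :=
  restrict P Q f = 0 \/ has_repeated_root (map_mpoly toFbar (restrict P Q f)).

Definition mu_d (P Q : 'rV[F]_3) (d : nat) : rat :=
  (#|[set c : Rd d | pbool (not_transverse P Q (poly_of c))]|%:R
    / #|{: Rd d}|%:R).

End Defs.

Definition rat_cvg (u : nat -> rat) (l : rat) : Prop :=
  forall eps : rat, 0 < eps -> exists N : nat, forall d, (N <= d)%N -> `|u d - l| < eps.

(* Take coordinates [s : t] on L. Restriction to L is a linear map from R_d
   to the binary forms of degree d, surjective because P and Q are independent,
   so all its fibres have the same size and mu_d(T_L) is the proportion of
   binary forms of degree d that vanish or have a repeated root. In the chart
   t = 1 a binary form g is the polynomial u = g(X, 1) of degree at most d, and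
   g is bad exactly when deg u <= d - 2 (a double root at infinity, or u = 0) or
   u is inseparable, i.e. has a double root over the algebraic closure. Over a
   finite field every u != 0 is uniquely a^2 b with a monic and b separable, and
   (c, a^2 b) |-> (a X + c)^2 b is a bijection from F x {deg = n - 2} onto the
   inseparable polynomials of degree n. Hence among the q^(d+1) polynomials of
   degree <= d there are
     q^(d-1) + q (q^(d-2) - q^(d-3)) + q (q^(d-1) - q^(d-2))
       = q^d + q^(d-1) - q^(d-2)
   bad ones. *)

From HB Require Import structures.
From Stdlib Require Import ClassicalEpsilon Classical_Prop.
From mathcomp Require Import all_boot all_order all_algebra all_field.
From mathcomp Require Import mpoly.
From mathcomp Require Import zify ring.

Set Implicit Arguments.
Unset Strict Implicit.
Unset Printing Implicit Defensive.

Import Order.TTheory GRing.Theory Num.Theory.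
Local Open Scope ring_scope.

Section SqrSeparableFactor.
Variable K : fieldType.
Implicit Types a b u v : {poly K}.

Lemma size_sqr_mul a b : a != 0 -> b != 0 ->
  size (a ^+ 2 * b) = ((size a).-1 * 2 + size b)%N.
Proof.
move=> a0 b0; rewrite size_mul ?expf_neq0 // -(size_exp a 2).
have : (0 < size (a ^+ 2))%N by rewrite size_poly_gt0 expf_neq0.
by case: (size (a ^+ 2)).
Qed.

Lemma sqr_separable_factor_dvd a b a' b' : a != 0 -> separable_poly b' ->
  a ^+ 2 * b = a' ^+ 2 * b' -> a %| a'.
Proof.
move=> a0 sep_b' e; set g := gcdp a a'.
have g0 : g != 0 by rewrite gcdp_eq0 negb_and a0.
have [v [v' [av av' cop]]] : exists v v', [/\ a = v * g, a' = v' * g & coprimep v v'].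
  exists (a %/ g), (a' %/ g); rewrite !divpK ?dvdp_gcdl ?dvdp_gcdr //.
  by split=> //; apply: coprimep_div_gcd; rewrite a0.
have {}e : v ^+ 2 * b = v' ^+ 2 * b'.
  apply: (mulIf (expf_neq0 2 g0)).
  by rewrite mulrAC [RHS]mulrAC -!exprMn -av -av'.
have v2_b' : v ^+ 2 %| b'.
  by rewrite -(Gauss_dvdpl _ (coprimep_expr 2 (coprimep_expl 2 cop))) mulrC -e dvdp_mulr.
have /size_poly1P[c c0 vc] : size v == 1%N.
  by apply: contraLR v2_b' => v1; rewrite separable_nosquare.
by rewrite av vc mul_polyC dvdpZl // dvdp_gcdr.
Qed.

Lemma sqr_separable_factor_uniq a b a' b' :
  a \is monic -> a' \is monic -> separable_poly b -> separable_poly b' ->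
  a ^+ 2 * b = a' ^+ 2 * b' -> a = a' /\ b = b'.
Proof.
move=> mon_a mon_a' sep_b sep_b' e.
have aa' : a = a'.
  apply/eqP; rewrite -eqp_monic //; apply/andP; split.
    exact: sqr_separable_factor_dvd (monic_neq0 mon_a) sep_b' e.
  exact: sqr_separable_factor_dvd (monic_neq0 mon_a') sep_b (esym e).
split=> //; apply: (mulfI (expf_neq0 2 (monic_neq0 mon_a'))).
by rewrite -[in LHS]aa'.
Qed.

End SqrSeparableFactor.

Section FinFieldSeparable.
Variable F : finFieldType.
Implicit Types u v a b : {poly F}.

Lemma deriv_eq0_exp_pchar p u : p \in [pchar F] -> u^`() = 0 ->
  exists h, u = h ^+ p.
Proof.
move=> pchar_p u'0; have p_gt0 : (0 < p)%N by rewrite prime_gt0 ?(pcharf_prime pchar_p).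
have [r frobK rK] := injF_bij (fmorph_inj (pFrobenius_aut pchar_p)).
pose v := \poly_(j < size u) u`_(j * p).
have u_comp : u = v \Po 'X^p.
  apply/polyP => i; rewrite coef_comp_poly_Xn //; case: ifP => [p_i | /negbT p'i].
    rewrite coef_poly divnK //; case: ltnP => // le.
    by rewrite nth_default // (leq_trans le (leq_div i p)).
  case: i p'i => [|i] p'i; first by rewrite dvdn0 in p'i.
  have /eqP : u^`()`_i = 0 by rewrite u'0 coef0.
  rewrite coef_deriv -mulr_natr mulf_eq0 => /orP[/eqP // |].
  by rewrite -(dvdn_pcharf pchar_p) (negbTE p'i).
have exp_comp h : h ^+ p = map_poly (pFrobenius_aut pchar_p) h \Po 'X^p.
  have pchar_p' : p \in [pchar {poly F}] by rewrite pchar_poly.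
  rewrite -[h]coefK poly_def -(pFrobenius_autE pchar_p') !rmorph_sum.
  apply: eq_bigr => i _ /=; rewrite pFrobenius_autE exprZn map_polyZ map_polyXn.
  by rewrite linearZ /= comp_Xn_poly exprAC.
exists (map_poly r v); rewrite exp_comp u_comp; congr (_ \Po _).
apply/polyP => i; rewrite !coef_map_id0 ?rK //.
all: by rewrite -[in RHS](frobK 0) rmorph0.
Qed.

Lemma not_separable_sqr_dvd u : ~~ separable_poly u ->
  exists2 v : {poly F}, size v != 1%N & v ^+ 2 %| u.
Proof.
move=> /negP sep'u; apply: NNPP => no_sqr; apply: sep'u.
apply/separable_polyP; split=> [|v v_u v_gt1].
  by apply/poly_square_freeP => v v1; apply/negP => v2_u; apply: no_sqr; exists v.
apply/eqP => v'0; have [p p_pr pchar_p] := finPcharP F.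
have [h v_h] := deriv_eq0_exp_pchar pchar_p v'0.
apply: no_sqr; exists h.
  apply: contraTneq v_gt1 => /eqP/size_poly1P[c _ hc].
  by rewrite v_h hc -polyC_exp -leqNgt size_polyC_leq1.
by rewrite (dvdp_trans _ v_u) // v_h dvdp_exp2l // prime_gt1.
Qed.

Lemma sqr_separable_factor_exists u : u != 0 ->
  exists a b, [/\ a \is monic, separable_poly b & u = a ^+ 2 * b].
Proof.
elim: {u}(size u) {-2}u (leqnn (size u)) => [u|n IHn u] size_u u0.
  by move: size_u; rewrite leqn0 size_poly_eq0 (negbTE u0).
have [sep_u | /not_separable_sqr_dvd[v v1 /dvdpP[w u_wv]]] := boolP (separable_poly u).
  by exists 1, u; rewrite monic1 expr1n mul1r.
have w0 : w != 0 by apply: contraNneq u0 => w0; rewrite u_wv w0 mul0r.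
have v0 : v != 0 by apply: contraNneq u0 => v0; rewrite u_wv v0 expr0n mulr0.
have [|a [b [mon_a sep_b w_ab]]] := IHn w _ w0.
  have v_gt1 : (1 < size v)%N by rewrite ltn_neqAle eq_sym v1 size_poly_gt0.
  move: v_gt1 size_u; rewrite u_wv mulrC size_sqr_mul //.
  (* [set] merges the two elaborations of [size w] into one atom for [lia]. *)
  by set sw := size w; case: (size v) => [|k] /=; lia.
have lv0 : lead_coef v != 0 by rewrite lead_coef_eq0.
exists (a * ((lead_coef v)^-1 *: v)), (lead_coef v ^+ 2 *: b); split.
- by rewrite monicMl // monicE lead_coefZ mulVf.
- by rewrite (dvdp_separable _ sep_b) // dvdpZl ?expf_neq0.
have lvK : (lead_coef v)^-1%:P * (lead_coef v)%:P = 1 by rewrite -polyCM mulVf.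
rewrite u_wv w_ab -!mul_polyC polyC_exp; transitivity (a ^+ 2 * b * v ^+ 2 * 1 ^+ 2).
  by rewrite expr1n mulr1.
by rewrite -lvK; ring.
Qed.

Variables (L : closedFieldType) (iota : {rmorphism F -> L}).

Lemma not_separable_double_root u :
  ~~ separable_poly u <-> exists a : L, ('X - a%:P) ^+ 2 %| map_poly iota u.
Proof.
split=> [/not_separable_sqr_dvd[v v1 v2_u] | [a]].
  have /closed_rootP[a v_a] : size (map_poly iota v) != 1%N by rewrite size_map_poly.
  exists a; rewrite (dvdp_trans _ (_ : map_poly iota (v ^+ 2) %| _)) ?dvdp_map //.
  by rewrite rmorphXn dvdp_exp2r // dvdp_XsubCl.
apply: contraTN => sep_u.
by rewrite separable_nosquare ?size_XsubC ?separable_map.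
Qed.

End FinFieldSeparable.

Section BinaryForm.
Variable R : comRingType.
Implicit Types (c e : R) (u v : {poly R}).

(* The homogenization t^k u(s/t) of u, with s = 'X_0 and t = 'X_1. *)
Definition binary_form k u : {mpoly R[2]} :=
  \sum_(j < k.+1) u`_j *: ('X_0 ^+ j * 'X_1 ^+ (k - j)).

Lemma binary_form_is_linear k : linear (binary_form k).
Proof.
move=> c u v; rewrite /binary_form scaler_sumr -big_split /=; apply: eq_bigr => j _.
by rewrite coefD coefZ scalerDl scalerA.
Qed.

HB.instance Definition _ k := GRing.isLinear.Build R {poly R} {mpoly R[2]} _
  (binary_form k) (binary_form_is_linear k).

Lemma binary_form_MX k v : (size v <= k.+1)%N ->
  binary_form k.+1 ('X * v) = 'X_0 * binary_form k v.
Proof.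
move=> size_v; rewrite /binary_form big_ord_recl coefXM /= scale0r add0r mulr_sumr.
apply: eq_bigr => j _; rewrite coefXM /= -scalerAr exprS /= subSS.
by congr (_ *: _); rewrite mulrA.
Qed.

Lemma binary_form_S k v : (size v <= k.+1)%N ->
  binary_form k.+1 v = 'X_1 * binary_form k v.
Proof.
move=> size_v; rewrite /binary_form big_ord_recr /= nth_default // scale0r addr0.
rewrite mulr_sumr; apply: eq_bigr => j _.
by rewrite -scalerAr subSn 1?exprS 1?mulrCA // -ltnS.
Qed.

Lemma binary_form_linear_mul k c e v : (size v <= k.+1)%N ->
  binary_form k.+1 ((c *: 'X + e%:P) * v) = (c *: 'X_0 + e *: 'X_1) * binary_form k v.
Proof.
move=> size_v; rewrite mulrDl -scalerAl mul_polyC linearD !linearZ /=.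
by rewrite binary_form_MX // binary_form_S // mulrDl -!scalerAl.
Qed.

Lemma size_linear_mul c e v : (size ((c *: 'X + e%:P) * v)%R <= (size v).+1)%N.
Proof.
have size_lin : (size (c *: 'X + e%:P)%R <= 2)%N.
  rewrite (leq_trans (size_polyD _ _)) // geq_max (leq_trans (size_polyC_leq1 e)) //.
  by rewrite (leq_trans (size_scale_leq _ _)) // size_polyX.
rewrite (leq_trans (size_mul_leq _ _)) //.
by case: (size _) size_lin => [|[|[|]]] // _; rewrite ?leqW ?leq_pred.
Qed.

Lemma binary_form_linear_prod (I : Type) (r : seq I) (c e : I -> R) (m : I -> nat) :
  let p := \prod_(i <- r) (c i *: 'X + (e i)%:P) ^+ m i in
  (size p <= (\sum_(i <- r) m i).+1)%N /\
  binary_form (\sum_(i <- r) m i) p = \prod_(i <- r) (c i *: 'X_0 + e i *: 'X_1) ^+ m i.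
Proof.
elim: r => [|i r [size_p IHr]] /=.
  rewrite !big_nil size_poly1 /binary_form big_ord_recl big_ord0 addr0 coef1 /=.
  by rewrite !expr0 mulr1 scale1r.
rewrite !big_cons; elim: (m i) => [|n [IHsize IHn]]; first by rewrite !expr0 !mul1r.
rewrite addSn exprS -mulrA; split.
  by rewrite (leq_trans (size_linear_mul _ _ _)) ?ltnS.
by rewrite binary_form_linear_mul // IHn exprS mulrA.
Qed.

Definition dehomog_t : {rmorphism {mpoly R[2]} -> {poly R}} :=
  mmap (@polyC R) (fun i : 'I_2 => if i == 0 :> nat then 'X else 1).
Definition dehomog_s : {rmorphism {mpoly R[2]} -> {poly R}} :=
  mmap (@polyC R) (fun i : 'I_2 => if i == 0 :> nat then 1 else 'X).

Lemma binary_formK k u : (size u <= k.+1)%N -> dehomog_t (binary_form k u) = u.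
Proof.
move=> size_u; rewrite /binary_form rmorph_sum /=.
under eq_bigr do rewrite mmapZ mul_polyC rmorphM !rmorphXn /= !mmapX !mmap1U /= expr1n mulr1.
rewrite -poly_def; apply/polyP => i; rewrite coef_poly.
by case: ltnP => // le_k_i; rewrite nth_default // (leq_trans size_u).
Qed.

Lemma coef_dehomog_s_binary_form k u i : (i <= k)%N ->
  (dehomog_s (binary_form k u))`_i = u`_(k - i).
Proof.
move=> le_i_k; rewrite /binary_form rmorph_sum coef_sum /=.
rewrite (bigD1 (Ordinal (leq_ltn_trans (leq_subr i k) (ltnSn k)))) //= big1 ?addr0.
  rewrite mmapZ mul_polyC rmorphM !rmorphXn /= !mmapX !mmap1U /= expr1n mul1r.
  by rewrite coefZ coefXn subKn // eqxx mulr1.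
move=> j /eqP neq_j; rewrite mmapZ mul_polyC rmorphM !rmorphXn /= !mmapX !mmap1U /=.
rewrite expr1n mul1r coefZ coefXn; case: eqP => [e_ki|]; last by rewrite mulr0.
by case: neq_j; apply: val_inj => /=; move: (ltn_ord j) e_ki; lia.
Qed.

End BinaryForm.

Lemma map_binary_form (R S : comRingType) (f : {rmorphism R -> S}) k (u : {poly R}) :
  map_mpoly f (binary_form k u) = binary_form k (map_poly f u).
Proof.
rewrite /binary_form rmorph_sum /=; apply: eq_bigr => j _.
by rewrite map_mpolyZ rmorphM !rmorphXn /= !map_mpolyX coef_map.
Qed.

Section BinaryFormRepeatedRoot.
Variable K : fieldType.
Implicit Types (u : {poly K}) (a b : K).

Lemma binary_form_sqr_factor_low_or_double_root k u a b h :
  (size u <= k.+3)%N -> (a, b) != (0, 0) ->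
  binary_form k.+2 u = (b *: 'X_0 - a *: 'X_1) ^+ 2 * h ->
  (size u <= k.+1)%N \/ exists x, ('X - x%:P) ^+ 2 %| u.
Proof.
move=> size_u ab0 u_h; have [b0 | b0] := eqVneq b 0; [left | right].
  (* The double root is t = 0, at infinity of the chart t = 1: look at s = 1. *)
  have top0 i : (i < 2)%N -> u`_(k.+2 - i) = 0.
    move=> lt_i2; rewrite -coef_dehomog_s_binary_form; last by lia.
    rewrite u_h b0 scale0r sub0r sqrrN rmorphM rmorphXn /= /dehomog_s mmapZ mmapX mmap1U.
    by rewrite /= mul_polyC exprZn -scalerAl coefZ coefXnM lt_i2 mulr0.
  apply/leq_sizeP => j lt_k_j; have [lt_j | le_j] := ltnP j k.+3; last first.
    by rewrite nth_default // (leq_trans size_u).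
  have [->|->] : j = (k.+2 - 1)%N \/ j = (k.+2 - 0)%N by lia.
    exact: top0.
  exact: top0.
exists (a / b); have := congr1 (@dehomog_t K) u_h; rewrite binary_formK // => ->.
rewrite (rmorphM (dehomog_t K)) (rmorphXn (dehomog_t K)) (rmorphB (dehomog_t K)) /=.
rewrite /dehomog_t !mmapZ !mmapX !mmap1U /= !mul_polyC.
have -> : b *: 'X - a *: 1 = b *: ('X - (a / b)%:P) :> {poly K}.
  by rewrite scalerBr -!mul_polyC -polyCM mulr1 mulrCA divff // mulr1.
by rewrite exprZn -scalerAl dvdpZr ?expf_neq0 // dvdp_mulr.
Qed.

Lemma low_or_double_root_binary_form_sqr_factor k u : (size u <= k.+3)%N ->
  (size u <= k.+1)%N \/ (exists x, ('X - x%:P) ^+ 2 %| u) ->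
  exists a b, (a, b) != (0, 0) /\
    exists h, binary_form k.+2 u = (b *: 'X_0 - a *: 'X_1) ^+ 2 * h.
Proof.
move=> size_u [size_u' | [x /dvdpP[w u_w]]].
  exists 1, 0; split; first by rewrite xpair_eqE oner_eq0.
  exists (binary_form k u).
  by rewrite !binary_form_S ?(leq_trans size_u') // scale0r sub0r scale1r sqrrN mulrA.
have size_w : (size w <= k.+1)%N.
  have [-> | w0] := eqVneq w 0; first by rewrite size_poly0.
  move: size_u; rewrite u_w size_mul ?expf_neq0 ?polyXsubC_eq0 // size_exp_XsubC.
  by rewrite addn3.
exists x, 1; split; first by rewrite xpair_eqE oner_eq0 andbF.
exists (binary_form k w).
have Xx : 'X - x%:P = 1 *: 'X + (- x)%:P by rewrite scale1r polyCN.
rewrite u_w mulrC expr2 -mulrA Xx !binary_form_linear_mul ?size_linear_mul //.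
  by rewrite scaleNr mulrA -expr2.
exact: leq_trans (size_linear_mul _ _ _) _.
Qed.

End BinaryFormRepeatedRoot.

Section AddDoubleRoot.
Variable F : finFieldType.
Implicit Types (c : F) (u v : {poly F}).

Definition sqr_separable_factor u : {poly F} * {poly F} :=
  epsilon (inhabits (0, 0))
    (fun x => [/\ x.1 \is monic, separable_poly x.2 & u = x.1 ^+ 2 * x.2]).

Lemma sqr_separable_factorP u : u != 0 ->
  let: (a, b) := sqr_separable_factor u in
  [/\ a \is monic, separable_poly b & u = a ^+ 2 * b].
Proof.
move=> /sqr_separable_factor_exists[a [b ab_u]].
have /(epsilon_spec (inhabits (0, 0))) : exists x : {poly F} * {poly F},
  [/\ x.1 \is monic, separable_poly x.2 & u = x.1 ^+ 2 * x.2] by exists (a, b).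
by rewrite /sqr_separable_factor; case: (epsilon _ _).
Qed.

Definition add_double_root c u : {poly F} :=
  let: (a, b) := sqr_separable_factor u in (a * 'X + c%:P) ^+ 2 * b.

Lemma monic_MXaddC a c : a != 0 -> (a * 'X + c%:P \is monic) = (a \is monic).
Proof.
move=> a0; rewrite !monicE lead_coefDl ?lead_coefMX // size_mulX //.
by rewrite (leq_ltn_trans (size_polyC_leq1 c)) // ltnS size_poly_gt0.
Qed.

Lemma size_add_double_root c u : u != 0 -> size (add_double_root c u) = (size u).+2.
Proof.
move=> /sqr_separable_factorP; rewrite /add_double_root.
case: sqr_separable_factor => a b [mon_a sep_b ->].
have [a0 b0] := (monic_neq0 mon_a, separable_poly_neq0 sep_b).
have aXc0 : a * 'X + c%:P != 0 by rewrite monic_neq0 ?monic_MXaddC.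
rewrite !size_sqr_mul // size_MXaddC (negbTE a0) /=.
by case: (size a) (size_poly_gt0 a) => [|k] /=; rewrite ?a0 // mulSn addnCA.
Qed.

Lemma add_double_root_not_separable c u : u != 0 ->
  ~~ separable_poly (add_double_root c u).
Proof.
move=> /sqr_separable_factorP; rewrite /add_double_root.
case: sqr_separable_factor => a b [mon_a _ _].
apply/negP => /(@separable_nosquare _ _ (a * 'X + c%:P) 2)/(_ (ltnSn 1)).
rewrite size_MXaddC (negbTE (monic_neq0 mon_a)) eqSS size_poly_eq0 monic_neq0 //.
by rewrite dvdp_mulr // => /(_ isT).
Qed.

Lemma add_double_root_inj c c' u u' : u != 0 -> u' != 0 ->
  add_double_root c u = add_double_root c' u' -> c = c' /\ u = u'.
Proof.
move=> /sqr_separable_factorP + /sqr_separable_factorP; rewrite /add_double_root.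
case: sqr_separable_factor => a b [mon_a sep_b ->].
case: sqr_separable_factor => a' b' [mon_a' sep_b' ->].
case/sqr_separable_factor_uniq; rewrite ?monic_MXaddC ?monic_neq0 // => e ->.
have cc' : c = c'.
  by have := congr1 (coefp 0) e; rewrite /= !coefD !coefMX !coefC /= !add0r.
by move: e; rewrite cc' => /addIr/mulIf -> //; rewrite polyX_eq0.
Qed.

Lemma add_double_root_onto v : v != 0 -> ~~ separable_poly v ->
  exists c u, u != 0 /\ v = add_double_root c u.
Proof.
move=> v0 sep'v; move: (sqr_separable_factorP v0).
case: sqr_separable_factor => A b [mon_A sep_b v_Ab].
have [a [c A_ac]] : exists a c, A = a * 'X + c%:P.
  exists (drop_poly 1 A), A`_0; rewrite -[LHS](poly_take_drop 1) expr1 addrC.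
  by congr (_ + _); apply/polyP => -[|i]; rewrite coef_take_poly coefC.
have a0 : a != 0.
  apply: contraNneq sep'v => a0; move: mon_A; rewrite v_Ab A_ac a0 mul0r add0r.
  by rewrite monicE lead_coefC => /eqP->; rewrite expr1n mul1r.
have mon_a : a \is monic by rewrite -(monic_MXaddC c a0) -A_ac.
have u0 : a ^+ 2 * b != 0 := mulf_neq0 (expf_neq0 2 a0) (separable_poly_neq0 sep_b).
exists c, (a ^+ 2 * b); split=> //; move: (sqr_separable_factorP u0).
rewrite /add_double_root; case: sqr_separable_factor => a' b' [mon_a' sep_b' e].
by have [<- <-] := sqr_separable_factor_uniq mon_a mon_a' sep_b sep_b' e; rewrite v_Ab A_ac.
Qed.

End AddDoubleRoot.

Section CountBySize.
Variables (F : finFieldType) (N : nat).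
Local Notation q := #|F|.

Lemma card_rVpoly_size_leq s : (s <= N)%N ->
  #|[set w : 'rV[F]_N | (size (rVpoly w) <= s)%N]| = (q ^ s)%N.
Proof.
move=> sN; have -> : (q ^ s)%N = #|[set: 'rV[F]_s]| by rewrite cardsT card_mx mul1n.
pose embed (v : 'rV[F]_s) : 'rV[F]_N := poly_rV (rVpoly v).
have rVpoly_embed v : rVpoly (embed v) = rVpoly v.
  by rewrite poly_rV_K // (leq_trans (size_poly _ _) sN).
rewrite -(card_imset _ (can_inj (_ : cancel embed (fun w => poly_rV (rVpoly w))))); last first.
  by move=> v; rewrite rVpoly_embed rVpolyK.
apply: eq_card => w; rewrite inE; apply/idP/imsetP => [size_w | [v _ ->]].
  by exists (poly_rV (rVpoly w)); rewrite ?inE // /embed poly_rV_K // rVpolyK.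
by rewrite rVpoly_embed size_poly.
Qed.

Lemma card_rVpoly_size_eq s : (s < N)%N ->
  (#|[set w : 'rV[F]_N | size (rVpoly w) == s.+1]| + q ^ s)%N = (q ^ s.+1)%N.
Proof.
move=> sN; rewrite -!card_rVpoly_size_leq ?(ltnW sN) //.
rewrite -(cardsID [set w : 'rV[F]_N | (size (rVpoly w) <= s)%N]
                 [set w : 'rV[F]_N | (size (rVpoly w) <= s.+1)%N]) addnC.
congr (_ + _)%N; apply: eq_card => w; rewrite !inE.
  by apply/idP/andP => [le_s | [] //]; rewrite leqW.
by rewrite -ltnNge andbC -eqn_leq.
Qed.

Lemma card_rVpoly_size_not_separable s : (0 < s)%N -> (s.+2 <= N)%N ->
  #|[set w : 'rV[F]_N | (size (rVpoly w) == s.+2) && ~~ separable_poly (rVpoly w)]| =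
  (q * #|[set w : 'rV[F]_N | size (rVpoly w) == s]|)%N.
Proof.
move=> s_gt0 sN; set D := [set w : 'rV[F]_N | size (rVpoly w) == s].
pose embed (x : F * 'rV[F]_N) : 'rV[F]_N := poly_rV (add_double_root x.1 (rVpoly x.2)).
have D_neq0 w : w \in D -> rVpoly w != 0.
  by rewrite inE -size_poly_eq0 => /eqP->; rewrite -lt0n.
have rVpoly_embed c w : w \in D -> rVpoly (embed (c, w)) = add_double_root c (rVpoly w).
  move=> Dw; rewrite poly_rV_K // size_add_double_root ?D_neq0 //.
  by move: Dw; rewrite inE => /eqP->.
rewrite -[q]cardsT -cardsX -(@card_in_imset _ _ embed); last first.
  move=> [c w] [c' w'] /setXP[_ Dw] /setXP[_ Dw'] /(congr1 rVpoly).
  rewrite !rVpoly_embed // => e.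
  by have [-> /(can_inj rVpolyK)->] := add_double_root_inj (D_neq0 _ Dw) (D_neq0 _ Dw') e.
apply: eq_card => v; rewrite inE.
apply/andP/imsetP => [[/eqP size_v sep'v] | [[c w] /setXP[_ Dw] ->]].
  have v0 : rVpoly v != 0 by rewrite -size_poly_eq0 size_v.
  have [c [u [u0 vu]]] := add_double_root_onto v0 sep'v.
  have size_u : size u = s.
    by apply: succn_inj; apply: succn_inj; rewrite -size_v vu size_add_double_root.
  have uN : (size u <= N)%N by rewrite size_u; lia.
  exists (c, poly_rV u); first by rewrite !inE poly_rV_K // size_u /=.
  by rewrite /embed poly_rV_K // -vu rVpolyK.
rewrite rVpoly_embed // size_add_double_root ?add_double_root_not_separable ?D_neq0 //.
by move: Dw; rewrite inE => /eqP->.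
Qed.

End CountBySize.

Section CountLowOrNotSeparable.
Variable F : finFieldType.
Local Notation q := #|F|.

Lemma card_rVpoly_low_or_not_separable e :
  (#|[set w : 'rV[F]_e.+4 |
      (size (rVpoly w) <= e.+2)%N || ~~ separable_poly (rVpoly w)]| + q ^ e.+1)%N =
  (q ^ e.+3 + q ^ e.+2)%N.
Proof.
set B := [set w | _]; set S := [set w : 'rV[F]_e.+4 | (size (rVpoly w) <= e.+2)%N].
pose Bk k := [set w : 'rV[F]_e.+4 | (size (rVpoly w) == k.+2) && ~~ separable_poly (rVpoly w)].
have B_split : B = S :|: Bk e.+1 :|: Bk e.+2.
  apply/setP => w; rewrite !inE.
  have : (size (rVpoly w) <= e.+4)%N := size_poly _ _.
  (* As above, [set] merges the elaborations of [size (rVpoly w)] for [lia]. *)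
  set n := size (rVpoly w).
  by case: (~~ _); rewrite ?andbT ?andbF ?orbT ?orbF // => ?; apply/esym; lia.
have disj1 : S :&: Bk e.+1 = set0.
  by apply/setP => w; rewrite !inE; case: (~~ _); lia.
have disj2 : (S :|: Bk e.+1) :&: Bk e.+2 = set0.
  by apply/setP => w; rewrite !inE; case: (~~ _); lia.
have := cardsUI (S :|: Bk e.+1) (Bk e.+2); have := cardsUI S (Bk e.+1).
have [lt0 lt1] : (e < e.+4)%N /\ (e.+1 < e.+4)%N by lia.
rewrite disj1 disj2 !cards0 !addn0 -B_split (card_rVpoly_size_leq _ lt1).
rewrite !card_rVpoly_size_not_separable ?leqnSn //.
have /(congr1 (muln q)) := card_rVpoly_size_eq F lt0.
have /(congr1 (muln q)) := card_rVpoly_size_eq F lt1.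
rewrite !mulnDr -!expnS; lia.
Qed.

End CountLowOrNotSeparable.

Section Fibres.
Variables (U V : finZmodType) (f : U -> V).
Hypotheses (fB : {morph f : x y / x - y}) (f_surj : forall v, exists u, f u = v).

Lemma card_fibre_additive v : #|f @^-1: [set v]| = #|f @^-1: [set 0]|.
Proof.
have [u0 <-] := f_surj v.
rewrite -(card_imset _ (addIr (- u0))); apply: eq_card => u; rewrite inE.
apply/imsetP/idP => [[x] | fu0].
  by rewrite !inE => /eqP fx ->; rewrite fB fx subrr.
exists (u + u0); last by rewrite addrK.
by rewrite !inE -subr_eq0 -fB addrK; rewrite !inE in fu0.
Qed.

Lemma card_preimset_additive (B : {set V}) : (#|f @^-1: B| * #|V|)%N = (#|B| * #|U|)%N.
Proof.
have card_pre (A : {set V}) : #|f @^-1: A| = (#|A| * #|f @^-1: [set 0%R : V]|)%N.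
  rewrite -sum1_card (partition_big f (mem A)) => [|u]; last by rewrite inE.
  rewrite -sum_nat_const; apply: eq_bigr => v Av; rewrite -(card_fibre_additive v) -sum1_card.
  by apply: eq_bigl => u; rewrite !inE andb_idl // => /eqP ->.
by rewrite (card_pre B) -[#|U|]cardsT -(preimsetT f) (card_pre setT) cardsT mulnAC mulnA.
Qed.

End Fibres.

Section RestrictAffine.
Variables (F : finFieldType) (P Q : 'rV[F]_3).

(* f(X P + Q): the restriction of f to L in the chart t = 1. *)
Definition restrict_affine : {rmorphism {mpoly F[3]} -> {poly F}} :=
  mmap (@polyC F) (fun i => P 0 i *: 'X + (Q 0 i)%:P).

Lemma restrict_affine_monomial d (m : mon3 d) :
  let p := restrict_affine 'X_[val (val m)] in
  (size p <= d.+1)%N /\ binary_form d p = restrict P Q 'X_[val (val m)].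
Proof.
have [] := binary_form_linear_prod (index_enum 'I_3) (fun i => P 0 i) (fun i => Q 0 i)
  (fun i => val (val m) i).
rewrite -mdegE (eqP (valP m)) /restrict_affine /= mmapX /mmap1 => -> ->; split=> //.
rewrite /restrict comp_mpolyX.
by under [RHS]eq_bigr do rewrite tnth_mktuple.
Qed.

Lemma size_restrict_affine d (c : Rd F d) : (size (restrict_affine (poly_of c)) <= d.+1)%N.
Proof.
rewrite /poly_of rmorph_sum /=; apply: (big_ind (fun p : {poly F} => size p <= d.+1)%N).
- by rewrite size_poly0.
- by move=> p p' sp sp'; rewrite (leq_trans (size_polyD _ _)) // geq_max sp sp'.
move=> m _; rewrite /restrict_affine mmapZ mul_polyC (leq_trans (size_scale_leq _ _)) //.
exact: (restrict_affine_monomial m).1.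
Qed.

Lemma restrict_poly_of d (c : Rd F d) :
  restrict P Q (poly_of c) = binary_form d (restrict_affine (poly_of c)).
Proof.
rewrite /poly_of rmorph_sum linear_sum /restrict raddf_sum /=; apply: eq_bigr => m _.
rewrite comp_mpolyZ /restrict_affine mmapZ mul_polyC linearZ /=.
by congr (_ *: _); exact: esym (restrict_affine_monomial m).2.
Qed.

Lemma not_transverse_poly_of k (c : Rd F k.+2) :
  let u := restrict_affine (poly_of c) in
  not_transverse P Q (poly_of c) <-> (size u <= k.+1)%N \/ ~~ separable_poly u.
Proof.
move=> u; have size_u : (size u <= k.+3)%N := size_restrict_affine c.
rewrite /not_transverse restrict_poly_of map_binary_form -/u.
have -> : binary_form k.+2 u = 0 <-> u = 0.
  by split=> [u0 | ->]; [rewrite -(binary_formK size_u) u0 rmorph0 | rewrite linear0].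
rewrite /has_repeated_root; split.
- case=> [-> | [a [b [ab0 [h u_h]]]]]; first by left; rewrite size_poly0.
  have := binary_form_sqr_factor_low_or_double_root _ ab0 u_h.
  rewrite size_map_poly => /(_ size_u)[|/(not_separable_double_root (toFbar F) u).2].
    by left.
  by right.
- case=> [low | /(not_separable_double_root (toFbar F) u).1 dbl]; right.
    by apply: low_or_double_root_binary_form_sqr_factor; rewrite size_map_poly //; left.
  by apply: low_or_double_root_binary_form_sqr_factor; rewrite ?size_map_poly //; right.
Qed.

End RestrictAffine.

(* Registering the instances of the unfolded [{ffun _ -> F}] on [Rd F d]
   itself makes [Rd F d] a [finZmodType]. *)
HB.instance Definition _ (F : finFieldType) (d : nat) := GRing.Zmodule.on (Rd F d).
HB.instance Definition _ (F : finFieldType) (d : nat) := Finite.on (Rd F d).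

Section PolyOf.
Variable F : finFieldType.

Lemma poly_ofB d : {morph @poly_of F d : x y / x - y}.
Proof.
by move=> x y; rewrite /poly_of -sumrB; apply: eq_bigr => m _; rewrite !ffunE scalerBl.
Qed.

Lemma poly_of_homog d (f : {mpoly F[3]}) : f \is d.-homog -> exists c : Rd F d, poly_of c = f.
Proof.
move=> homog_f; exists [ffun m : mon3 d => f@_(val (val m))].
apply/mpolyP => k; rewrite /poly_of raddf_sum /=.
under eq_bigr do rewrite mcoeffZ mcoeffX ffunE.
have [deg_k | deg'k] := eqVneq (mdeg k) d; last first.
  rewrite (dhomog_nemf_coeff homog_f deg'k) big1 // => m _.
  by case: eqP => [km | _]; rewrite ?mulr0 //; rewrite -km (eqP (valP m)) eqxx in deg'k.
have lt_k : (mdeg k < d.+1)%N by rewrite deg_k.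
rewrite (bigD1 (exist _ (BMultinom lt_k) (introT eqP deg_k))) //= eqxx mulr1.
rewrite big1 ?addr0 // => m m_k; case: eqP => [km | _]; rewrite ?mulr0 //.
by case/eqP: m_k; apply: val_inj; apply: val_inj.
Qed.

End PolyOf.

Lemma pboolP (P : Prop) : pbool P = true <-> P.
Proof. by rewrite /pbool; case: excluded_middle_informative. Qed.

Section RestrictOnto.
Variables (F : finFieldType) (P Q : 'rV[F]_3).

Lemma restrict_affine_linear_form (b : 'I_3 -> F) :
  restrict_affine P Q (\sum_(j < 3) b j *: 'X_j) =
  (\sum_(j < 3) b j * P 0 j) *: 'X + (\sum_(j < 3) b j * Q 0 j)%:P.
Proof.
rewrite raddf_sum /= scaler_suml rmorph_sum -big_split /=; apply: eq_bigr => j _.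
by rewrite /restrict_affine mmapZ mmapX mmap1U mul_polyC scalerDr scalerA scale_polyC.
Qed.

Hypothesis PQ_free : row_free (col_mx P Q).

Lemma restrict_affine_onto d (u : {poly F}) : (size u <= d.+1)%N ->
  exists2 f, f \is d.-homog & restrict_affine P Q f = u.
Proof.
(* The columns of a right inverse B of [col_mx P Q] are linear forms s, t with
   s(P) = t(Q) = 1 and s(Q) = t(P) = 0; the form \sum_i u_i s^i t^(d-i)
   then restricts to u. *)
move=> size_u; have [B PQB] := row_freeP PQ_free.
pose form (i : 'I_(1 + 1)) : {mpoly F[3]} := \sum_(j < 3) B j i *: 'X_j.
have form_homog i : form i \is 1.-homog.
  apply: rpred_sum => j _; apply/rpredZ/dhomogP => m.
  by rewrite msuppX mem_seq1 => /eqP ->; exact: mdeg1.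
have dual (i i' : 'I_(1 + 1)) : \sum_(j < 3) B j i * col_mx P Q i' j = (i' == i)%:R.
  have := congr1 (fun M : 'M[F]_(1 + 1) => M i' i) PQB; rewrite !mxE => <-.
  by apply: eq_bigr => j _; rewrite mulrC.
have restrict_form i : restrict_affine P Q (form i) =
    (lshift 1 0 == i)%:R *: 'X + ((rshift 1 0 == i)%:R)%:P.
  rewrite restrict_affine_linear_form -!dual.
  by congr (_ *: _ + _%:P); apply: eq_bigr => j _; rewrite ?col_mxEu ?col_mxEd.
pose s := form (lshift 1 0); pose t := form (rshift 1 0).
exists (\sum_(i < size u) u`_i *: (s ^+ i * t ^+ (d - i))).
  apply: rpred_sum => i _; apply: rpredZ.
  have := dhomogM (dhomogMn i (form_homog (lshift 1 0)))
    (dhomogMn (d - i) (form_homog (rshift 1 0))).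
  by rewrite !mul1n subnKC // -ltnS (leq_trans (ltn_ord i)).
rewrite raddf_sum /= -[RHS]coefK poly_def; apply: eq_bigr => i _.
rewrite -mul_mpolyC !rmorphM !rmorphXn /= !restrict_form /= mmapC.
by rewrite scale1r scale0r addr0 add0r expr1n mulr1 mul_polyC.
Qed.

Definition restrict_rV d (c : Rd F d) : 'rV[F]_d.+1 :=
  poly_rV (restrict_affine P Q (poly_of c)).

Lemma restrict_rVB d : {morph @restrict_rV d : x y / x - y}.
Proof. by move=> x y; rewrite /restrict_rV poly_ofB rmorphB linearB. Qed.

Lemma restrict_rV_onto d (w : 'rV[F]_d.+1) : exists c : Rd F d, restrict_rV c = w.
Proof.
have size_w : (size (rVpoly w) <= d.+1)%N := size_poly _ _.
have [f homog_f fw] := restrict_affine_onto size_w.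
have [c cf] := poly_of_homog homog_f.
by exists c; rewrite /restrict_rV cf fw rVpolyK.
Qed.

Lemma card_not_transverse e :
  (#|[set c : Rd F e.+3 | pbool (not_transverse P Q (poly_of c))]| * #|F| ^ e.+4)%N =
  (#|[set w : 'rV[F]_e.+4 | (size (rVpoly w) <= e.+2)%N || ~~ separable_poly (rVpoly w)]|
    * #|Rd F e.+3|)%N.
Proof.
have -> : (#|F| ^ e.+4)%N = #|'rV[F]_e.+4| by rewrite card_mx mul1n.
rewrite -(card_preimset_additive (@restrict_rVB e.+3)) //.
  congr (_ * _)%N; apply: eq_card => c.
  rewrite !inE /restrict_rV poly_rV_K ?size_restrict_affine //.
  by apply/idP/idP => [/pboolP/not_transverse_poly_of/orP | /orP/not_transverse_poly_of/pboolP].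
exact: restrict_rV_onto.
Qed.

End RestrictOnto.

Theorem lemma4p3 (F : finFieldType) (P Q : 'rV[F]_3) (hL : row_free (col_mx P Q)) :
  let q : rat := #|F|%:R in
  (forall d : nat, (3 <= d)%N -> mu_d P Q d = q^-1 + q^-2 - q^-3) /\
  rat_cvg (mu_d P Q) (q^-1 + q^-2 - q^-3).
Proof.
move=> q; have mu_dE d : (3 <= d)%N -> mu_d P Q d = q^-1 + q^-2 - q^-3.
  case: d => [|[|[|e]]] // _; rewrite /mu_d.
  have q0 : q != 0 by rewrite pnatr_eq0 -lt0n; apply/card_gt0P; exists 0.
  have Rd0 : #|{: Rd F e.+3}|%:R != 0 :> rat.
    by rewrite pnatr_eq0 -lt0n; apply/card_gt0P; exists 0.
  have /(congr1 (fun n => n%:R : rat)) := card_not_transverse hL e.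
  rewrite natrM natrX natrM -/q => /(canRL (mulfK (expf_neq0 _ q0))) ->.
  have /(congr1 (fun n => n%:R : rat)) := card_rVpoly_low_or_not_separable F e.
  rewrite !natrD !natrX -/q => /(canRL (addrK _)) ->.
  by rewrite !exprS; field; rewrite q0 Rd0 expf_neq0.
split=> // eps eps_gt0; exists 3%N => d le3d.
by rewrite mu_dE // subrr normr0.
Qed.
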